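(* Let $(T,\mathcal{F},\mu)$ be a non-atomic measure space with $0<\mu(T)<+\infty$, $E$ a real Banach space, and $f,g:E\to\mathbb{R}$ two functions, with $f$ lower semicontinuous and $g$ continuous, satisfying $$\sup_E f<+\infty,\quad \inf_E g=-\infty,\quad \sup_E g=+\infty$$ and $$\max\left\{\sup_{x\in E}\frac{|f(x)|}{1+\|x\|^p},\ \sup_{x\in E}\frac{|g(x)|}{1+\|x\|^p}\right\}<+\infty$$ for some $p\geq 1$. Assume that $f$ has at most one global minimum and that no zero of $g$ is a global minimum of $f$. For each $u\in L^p(T,E)$ set $$J(u)=\int_T f(u(t))\,d\mu+\left(\int_T g(u(t))\,d\mu\right)^2.$$ Then the restriction of $J$ to any decomposable subset of $L^p(T,E)$ containing the constant functions has no global minima.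
   Context: $L^p(T,E)$ denotes the space of all (equivalence classes of) strongly $\mu$-measurable functions $u:T\to E$ with $\int_T\|u(t)\|^p\,d\mu<+\infty$, normed by $\|u\|=(\int_T\|u(t)\|^p d\mu)^{1/p}$. A set $D\subseteq L^p(T,E)$ is decomposable if for every $u,v\in D$ and every $A\in\mathcal{F}$ the function $t\mapsto \chi_A(t)u(t)+(1-\chi_A(t))v(t)$ belongs to $D$, where $\chi_A$ is the characteristic function of $A$. *)

From HB Require Import structures.
From mathcomp Require Import all_boot all_order all_algebra.
From mathcomp Require Import all_classical all_reals all_analysis.
Set Implicit Arguments. Unset Strict Implicit. Unset Printing Implicit Defensive.
Import Order.TTheory GRing.Theory Num.Theory.
Import numFieldNormedType.Exports.
Local Open Scope classical_set_scope.
Local Open Scope ring_scope.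

Section defs.
Context {R : realType} {d : measure_display} {T : measurableType d}.
Variable mu : {measure set T -> \bar R}.

Definition nonatomic : Prop :=
  forall A, measurable A -> (0 < mu A)%E ->
    exists B, [/\ measurable B, B `<=` A, (0 < mu B)%E & (mu B < mu A)%E].

Definition simple_fun {E : normedModType R} (s : T -> E) : Prop :=
  finite_set (range s) /\ forall x : E, measurable (s @^-1` [set x]).

Definition strongly_measurable {E : normedModType R} (u : T -> E) : Prop :=
  exists s : nat -> T -> E, (forall n, simple_fun (s n)) /\
    {ae mu, forall t, s n t @[n --> \oo] --> u t}.

(* (representatives of) elements of L^p(T,E) *)
Definition Lp_fun {E : normedModType R} (p : R) (u : T -> E) : Prop :=
  strongly_measurable u /\ (\int[mu]_t ((`|u t| `^ p)%:E) < +oo)%E.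

Definition decomposable {E : normedModType R} (D : set (T -> E)) : Prop :=
  forall u v, D u -> D v -> forall A, measurable A ->
    D (fun t => (\1_A t : R) *: u t + (1 - (\1_A t : R)) *: v t).

Definition Jfun {E : normedModType R} (f g : E -> R) (u : T -> E) : R :=
  fine (\int[mu]_t ((f (u t))%:E)) + (fine (\int[mu]_t ((g (u t))%:E))) ^+ 2.

End defs.

(* If [u] minimizes [J] on [D], glue a constant [x] with a constant [z] on a set
   of small measure (non-atomicity), [z] being chosen by the intermediate value
   theorem so that the integral of [g] vanishes: this gives
   [J(u) <= mu(T) f(x)] for every [x].  Then
   [int f(u) + (int g(u))^2 <= mu(T) inf f] forces [int g(u) = 0] and
   [f(u) = inf f] a.e., so [u] is a.e. equal to the unique minimizer [x0] of
   [f], whence [mu(T) g(x0) = 0], contradicting the assumption on the zeros of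
   [g].  Strongly measurable functions are only a.e. limits of simple
   functions, so the argument runs on a modification of [u] on a null set
   whose preimages of open sets are measurable. *)

From HB Require Import structures.
From mathcomp Require Import all_boot all_order all_algebra.
From mathcomp Require Import all_classical all_reals all_analysis.
From mathcomp Require Import measurable_realfun lra.
Import Order.TTheory GRing.Theory Num.Theory.
Import numFieldNormedType.Exports.
Local Open Scope classical_set_scope.
Local Open Scope ring_scope.

Section glue.
Context {R : realType} {T : Type} {E : lmodType R}.

Definition glue (A : set T) (u v : T -> E) (t : T) : E :=
  (\1_A t : R) *: u t + (1 - \1_A t) *: v t.

Lemma glue_in (A : set T) (u v : T -> E) t : A t -> glue A u v t = u t.
Proof. by move=> At; rewrite /glue indicE mem_set// subrr scale0r addr0 scale1r. Qed.

Lemma glue_out (A : set T) (u v : T -> E) t : ~ A t -> glue A u v t = v t.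
Proof. by move=> At; rewrite /glue indicE memNset// subr0 scale0r add0r scale1r. Qed.

End glue.

Section borel_modification.
Context {R : realType} {d : measure_display} {T : measurableType d}.
Context {E : normedModType R}.

Lemma simple_fun_measurable_preimage (s : T -> E) (A : set E) :
  simple_fun s -> measurable (s @^-1` A).
Proof.
move=> [fin ms].
rewrite (_ : s @^-1` A = \bigcup_(x in range s `&` A) s @^-1` [set x]).
  by apply: fin_bigcup_measurable => [|x _]; [exact: finite_setIl|exact: ms].
apply/seteqP; split => [t At|t [x [_ Ax] /= ->]] //.
by exists (s t) => //; split => //; exists t.
Qed.

(* [u t] lies in the open set [V] iff, for some [k], the [1/(k+1)]-ball around
   [s n t] stays inside [V] for all large [n]. *)
Lemma measurable_preimage_open_cvg (s : nat -> T -> E) (u : T -> E) (N : set T) :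
  measurable N -> (forall n, simple_fun (s n)) ->
  (forall t, ~ N t -> s n t @[n --> \oo] --> u t) ->
  forall V, open V -> measurable (~` N `&` u @^-1` V).
Proof.
move=> mN ss cvu V oV.
pose M := \bigcup_k \bigcup_m \bigcap_n
  (s (n + m)%N @^-1` [set x | ball x k.+1%:R^-1 `<=` V]).
have mM : measurable M.
  do 2 apply: bigcupT_measurable => ?; apply: bigcapT_measurable => n.
  exact: simple_fun_measurable_preimage.
rewrite (_ : _ `&` _ = ~` N `&` M); first exact: measurableI (measurableC mN) mM.
apply/seteqP; split => t [Nt] Vt; split => //.
- have /nbhs_ballP[e /= e0 eV] : nbhs (u t) V by exact: open_nbhs_nbhs.
  have e2 : 0 < e / 2 by rewrite divr_gt0.
  have [k _ /(_ k (leqnn k)) ke] := near_infty_natSinv_lt (PosNum e2).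
  have /cvgrPdist_lt /(_ k.+1%:R^-1) := cvu t Nt.
  rewrite invr_gt0 ltr0n => /(_ erefl) [m _ sm].
  exists k => //; exists m => // n _ y; rewrite -!ball_normE /= => sy.
  apply: eV; rewrite -ball_normE /=.
  apply: le_lt_trans (ler_distD (s (n + m)%N t) _ _) _.
  rewrite [e]splitr; apply: ltrD; last exact: lt_trans sy ke.
  exact: lt_trans (sm _ (leq_addl _ _)) ke.
- case: Vt => k _ [m _ sm].
  have /cvgrPdist_lt /(_ k.+1%:R^-1) := cvu t Nt.
  rewrite invr_gt0 ltr0n => /(_ erefl) [m' _ sm'].
  apply: (sm m' I); rewrite -ball_normE /= distrC.
  exact: sm' (leq_addr _ _).
Qed.

Lemma measurable_preimage_open_glue (s : nat -> T -> E) (u : T -> E) (N : set T)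
    (c : E) :
  measurable N -> (forall n, simple_fun (s n)) ->
  (forall t, ~ N t -> s n t @[n --> \oo] --> u t) ->
  forall V, open V -> measurable (glue (~` N) u (cst c) @^-1` V).
Proof.
move=> mN ss cvu V oV.
rewrite (_ : _ @^-1` _ = (~` N `&` u @^-1` V) `|` (N `&` [set _ | V c])).
  apply: measurableU; first exact: measurable_preimage_open_cvg oV.
  apply: measurableI => //; have [Vc|Vc] := pselect (V c).
  - by rewrite (_ : [set _ | V c] = setT); last by apply/seteqP; split.
  - by rewrite (_ : [set _ | V c] = set0); last by apply/seteqP; split.
apply/seteqP; split => t /=.
- have [Nt|Nt] := pselect (N t); last by rewrite glue_in//; left.
  by rewrite glue_out; [right|move/(_ Nt)].
- by case=> -[Nt] ?; [rewrite glue_in|rewrite glue_out//; move/(_ Nt)].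
Qed.

Lemma measurable_comp_open_preimage {w : T -> E} {h : E -> R} :
  (forall V, open V -> measurable (w @^-1` V)) ->
  (forall a, open [set x | a < h x]) -> measurable_fun setT (h \o w).
Proof.
move=> mw oh; apply: (measurability _ (RGenOInfty.measurableE R)) => //.
move=> _ [_ [a ->] <-]; rewrite setTI.
rewrite (_ : _ @^-1` _ = w @^-1` [set x | a < h x]); first exact: mw.
by apply/seteqP; split => t /=; rewrite in_itv /= andbT.
Qed.

Lemma strongly_measurable_modification {mu : {measure set T -> \bar R}}
    {u : T -> E} (c : E) :
  strongly_measurable mu u -> exists N, [/\ measurable N, mu N = 0 &
    forall V, open V -> measurable (glue (~` N) u (cst c) @^-1` V)].
Proof.
move=> [s [ss [N [mN N0 Ncvg]]]]; exists N; split => //.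
apply: measurable_preimage_open_glue => // t Nt.
by apply: contrapT => ncvg; apply: Nt; exact: Ncvg.
Qed.

End borel_modification.

Section integral_null.
Context {R : realType} {d : measure_display} {T : measurableType d}.
Context {mu : {measure set T -> \bar R}}.
Import HBNNSimple.
Local Open Scope ereal_scope.

Let sup_sintegral (K : T -> \bar R) :=
  ereal_sup [set sintegral mu h |
             h in [set h : {nnsfun T >-> R} | forall t, (h t)%:E <= K t]].

(* A simple function below [K] is cut off on [N] to lie below [L]. *)
Let sup_sintegral_null_le {N : set T} {K L : T -> \bar R} :
  measurable N -> mu N = 0 -> (forall t, ~ N t -> K t = L t) ->
  (forall t, 0 <= L t) -> sup_sintegral K <= sup_sintegral L.
Proof.
move=> mN N0 KL L0; apply: ge_ereal_sup => _ [h hK <-].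
pose h' := mul_nnsfun h (indic_nnsfun R (measurableC mN)).
have h'E t : h' t = (h t * \1_(~` N) t)%R by [].
apply: ereal_sup_ubound; exists h'.
  move=> t /=; change (((h t * \1_(~` N) t)%R)%:E <= L t); rewrite indicE.
  have [Nt|Nt] := pselect (N t); first by rewrite memNset ?mulr0//; move/(_ Nt).
  by rewrite mem_set ?mulr1 -?KL.
have sintegralE (k : {nnsfun T >-> R}) : sintegral mu k = \int[mu]_t (k t)%:E.
  by rewrite integral_nnsfun// patch_setT.
have mk (k : {nnsfun T >-> R}) : measurable_fun setT (fun t => (k t)%:E).
  by apply/measurable_EFinP; exact: measurable_funTS.
rewrite !sintegralE.
rewrite [LHS](ge0_negligible_integral _ _ _ _ N0)// => [|t _]; last by rewrite lee_fin.
rewrite [RHS](ge0_negligible_integral _ _ _ _ N0)// => [|t _]; last by rewrite lee_fin.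
by apply: eq_integral => t; rewrite inE => -[_ Nt]; rewrite h'E indicE mem_set ?mulr1.
Qed.

Lemma integral_eq_off_null (N : set T) (F G : T -> \bar R) :
  measurable N -> mu N = 0 -> (forall t, ~ N t -> F t = G t) ->
  \int[mu]_t F t = \int[mu]_t G t.
Proof.
move=> mN N0 FG; rewrite /integral !patch_setT.
have sup_null (K L : T -> \bar R) : (forall t, ~ N t -> K t = L t) ->
    (forall t, 0 <= K t) -> (forall t, 0 <= L t) ->
    sup_sintegral K = sup_sintegral L.
  move=> KL K0 L0; apply/eqP.
  rewrite eq_le (sup_sintegral_null_le mN N0 KL L0).
  by rewrite (sup_sintegral_null_le mN N0 _ K0)// => t /KL.
congr (_ - _); apply: sup_null => t.
all: try by move=> Nt; rewrite ?funeposE ?funenegE FG.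
all: by [exact: funepos_ge0|exact: funeneg_ge0].
Qed.

Lemma ae_eq_integral_any (F G : T -> \bar R) :
  {ae mu, forall t, F t = G t} -> \int[mu]_t F t = \int[mu]_t G t.
Proof.
move=> [N [mN N0 NFG]]; apply: integral_eq_off_null mN N0 _ => t Nt.
by apply: contrapT => FGt; exact: Nt (NFG t FGt).
Qed.

Lemma ae_exists {P : T -> Prop} : 0 < mu setT -> {ae mu, forall t, P t} ->
  exists t, P t.
Proof.
move=> mu_gt0 [N [mN N0 NP]]; apply: contrapT => noP.
have : mu setT <= mu N.
  by apply: le_measure; rewrite ?inE// => t _; apply: NP => Pt; apply: noP; exists t.
by rewrite N0 leNgt mu_gt0.
Qed.

End integral_null.

Section finite_measure.
Context {R : realType} {d : measure_display} {T : measurableType d}.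
Context {mu : {measure set T -> \bar R}}.
Local Open Scope ereal_scope.
Hypothesis mu_fin : mu setT < +oo.

Lemma measure_fin_num {A : set T} : measurable A -> mu A \is a fin_num.
Proof.
move=> mA; rewrite ge0_fin_numE ?measure_ge0// (le_lt_trans _ mu_fin)//.
by rewrite le_measure ?inE.
Qed.

Lemma integrable_cst_fin (k : R) : mu.-integrable setT (fun _ => k%:E).
Proof.
apply/integrableP; split; first exact: measurable_cst.
rewrite (eq_integral (cst `|k|%:E)) => [|t _]; last by rewrite abse_EFin.
by rewrite integral_cst// -(fineK (measure_fin_num measurableT)) -EFinM ltry.
Qed.

Lemma integrable_indic_fin (A : set T) : measurable A ->
  mu.-integrable setT (fun t => (\1_A t)%:E).
Proof.
move=> mA; apply/integrableP; split; first exact/measurable_EFinP.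
rewrite (eq_integral (fun t => (\1_A t)%:E)) => [|t _]; last by rewrite gee0_abs.
by rewrite integral_indic// setIT -ge0_fin_numE ?measure_fin_num.
Qed.

Lemma integral_glue_cst {E : lmodType R} (F : E -> R) (A : set T) (x z : E) :
  measurable A -> \int[mu]_t (F (glue A (cst x) (cst z) t))%:E
                  = (F x)%:E * mu A + (F z)%:E * mu (~` A).
Proof.
move=> mA; have mAc : measurable (~` A) := measurableC mA.
rewrite (eq_integral (fun t => (F x)%:E * (\1_A t)%:E + (F z)%:E * (\1_(~` A) t)%:E)).
  rewrite integralD//; try by apply: integrableZl => //; exact: integrable_indic_fin.
  by rewrite !integralZl ?integrable_indic_fin// !integral_indic// !setIT.
move=> t _; rewrite !indicE; have [At|At] := pselect (A t).
- by rewrite glue_in// mem_set// memNset ?mule1 ?mule0 ?adde0//; move/(_ At).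
- by rewrite glue_out// memNset// mem_set// mule1 mule0 add0e.
Qed.

Lemma integrable_comp_growth {E : normedModType R} {h : E -> R} {w : T -> E}
    {C p : R} :
  measurable_fun setT (h \o w) ->
  mu.-integrable setT (fun t => (`|w t| `^ p)%:E) ->
  (forall x, `|h x| <= C * (1 + `|x| `^ p))%R ->
  mu.-integrable setT (fun t => (h (w t))%:E).
Proof.
move=> mhw iw hC.
apply: (le_integrable measurableT (g := fun t => C%:E * (1 + (`|w t| `^ p)%:E))).
- exact/measurable_EFinP.
- move=> t _; rewrite abse_EFin -EFinD -EFinM abse_EFin lee_fin.
  exact: le_trans (hC _) (ler_norm _).
- by apply: integrableZl => //; apply: integrableD => //; exact: integrable_cst_fin.
Qed.

Hypothesis mu_gt0 : 0 < mu setT.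
Hypothesis mu_nonatomic : nonatomic mu.

(* Split off a positive-measure part [B] of [S]: either [B] or [S \ B] has at
   most half the measure of [S]. *)
Lemma nonatomic_halving n : exists S, [/\ measurable S, (0 < fine (mu S))%R &
  (fine (mu S) <= fine (mu setT) / 2 ^+ n)%R].
Proof.
elim: n => [|n [S [mS S0 Sle]]].
  by exists setT; split; rewrite ?expr0 ?divr1// fine_gt0// mu_gt0 mu_fin.
have [B [mB BS B0 BS']] : exists B, [/\ measurable B, B `<=` S, 0 < mu B & mu B < mu S].
  by apply: mu_nonatomic; rewrite // -(fineK (measure_fin_num mS)) lte_fin.
move: B0 BS'; rewrite -(fineK (measure_fin_num mB)) -(fineK (measure_fin_num mS)).
rewrite !lte_fin => B0 BS'.
have half : (fine (mu S) / 2 <= fine (mu setT) / 2 ^+ n.+1)%R.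
  by rewrite exprSr invfM mulrA; apply: ler_wpM2r.
have [Bhalf|Bhalf] := leP (fine (mu B)) (fine (mu S) / 2)%R.
  by exists B; split => //; exact: le_trans half.
have SBE : fine (mu (S `\` B)) = (fine (mu S) - fine (mu B))%R.
  rewrite measureD// ?(setIidr BS) ?fineB ?measure_fin_num//.
  by rewrite -ge0_fin_numE ?measure_fin_num.
exists (S `\` B); split; first exact: measurableD.
- by rewrite SBE subr_gt0.
- by rewrite SBE; apply: le_trans half; lra.
Qed.

Lemma nonatomic_small_set (e : R) : (0 < e)%R ->
  exists S, [/\ measurable S, (0 < fine (mu S))%R & (fine (mu S) < e)%R].
Proof.
move=> e0; have r0 : (0 < fine (mu setT))%R by rewrite fine_gt0// mu_gt0 mu_fin.
have er0 : (0 < e / fine (mu setT))%R by rewrite divr_gt0.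
have [n _ /(_ n (leqnn n)) ne] := near_infty_natSinv_expn_lt (PosNum er0).
have [S [mS S0 Sle]] := nonatomic_halving n.
exists S; split => //; apply: le_lt_trans Sle _.
by rewrite -[e](@divfK _ (fine (mu setT))) ?gt_eqF// mulrC ltr_pM2r// -[_ ^- n]mul1r.
Qed.

End finite_measure.

Section superlevel.
Context {R : realType} {E : normedModType R}.

Lemma lower_semicontinuous_open_superlevel (h : E -> R) :
  lower_semicontinuous (fun x => (h x)%:E) -> forall a, open [set x | a < h x].
Proof.
by move=> /lower_semicontinuousP hlsc a; exact: hlsc.
Qed.

Lemma continuous_open_superlevel (h : E -> R) :
  continuous h -> forall a, open [set x | a < h x].
Proof.
move=> hcont a; rewrite (_ : [set x | _] = h @^-1` `]a, +oo[).
  by apply: (continuousP h).1 => //; exact: itv_open_ends_open.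
by apply/seteqP; split => x /=; rewrite in_itv /= andbT.
Qed.

Lemma continuous_unbounded_surj (h : E -> R) : continuous h ->
  (forall M, exists x, h x < M) -> (forall M, exists x, M < h x) ->
  forall y, exists x, h x = y.
Proof.
move=> hcont hlb hub y; have [a ha] := hlb y; have [b hb] := hub y.
have hab : {within `[0, 1], continuous (fun t : R => h (a + t *: (b - a)))}.
  apply: continuous_subspaceT => t; apply: continuous_comp; last exact: hcont.
  by apply: cvgD; [exact: cvg_cst|apply: cvgZl; exact: cvg_id].
have [|t _ <-] := @IVT R _ 0 1 y ler01 hab; last by exists (a + t *: (b - a)).
by rewrite scale0r scale1r addr0 addrC subrK ge_min le_max (ltW ha) (ltW hb) orbT.
Qed.

End superlevel.

Section minimizer.
Context {R : realType} {d : measure_display} {T : measurableType d}.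
Context {mu : {measure set T -> \bar R}}.
Hypotheses (mu_gt0 : (0 < mu setT)%E) (mu_fin : (mu setT < +oo)%E).

Lemma Jfun_glue_cst {E : normedModType R} (f g : E -> R) (A : set T) (x z : E) :
  measurable A ->
  Jfun mu f g (glue A (cst x) (cst z))
  = f x * fine (mu A) + f z * fine (mu (~` A))
    + (g x * fine (mu A) + g z * fine (mu (~` A))) ^+ 2.
Proof.
move=> mA; rewrite /Jfun !integral_glue_cst//.
rewrite -(fineK (measure_fin_num mu_fin mA)).
by rewrite -(fineK (measure_fin_num mu_fin (measurableC mA))).
Qed.

(* Glue [x] with a value [z] on a set of small measure, chosen so that the
   integral of [g] vanishes. *)
Lemma Jfun_min_le_cst {E : normedModType R} {f g : E -> R} {D : set (T -> E)}
    {u : T -> E} {M : R} :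
  nonatomic mu -> continuous g -> (forall x, f x <= M) ->
  (forall M, exists x, g x < M) -> (forall M, exists x, M < g x) ->
  decomposable D -> (forall c : E, D (fun _ => c)) ->
  (forall v, D v -> Jfun mu f g u <= Jfun mu f g v) ->
  forall x, Jfun mu f g u <= f x * fine (mu setT).
Proof.
move=> mu_na g_cont fM g_lb g_ub D_dec D_cst u_min x.
apply/ler_addgt0Pr => e e0; set r := fine (mu setT).
have del0 : 0 < e / (M - f x + 1) by rewrite divr_gt0// ltr_wpDl// subr_ge0.
have [S [mS s0 s_small]] := nonatomic_small_set mu_fin mu_gt0 mu_na _ del0.
set s := fine (mu S) in s0 s_small.
have mu_Sc : fine (mu (~` S)) = r - s.
  rewrite -setTD measureD// setTI fineB//; exact: measure_fin_num.
have [z gz] := continuous_unbounded_surj g g_cont g_lb g_ub (- (g x * (r - s)) / s).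
have mSc : measurable (~` S) := measurableC mS.
have := u_min _ (D_dec _ _ (D_cst x) (D_cst z) _ mSc).
rewrite -[fun t => _]/(glue (~` S) (cst x) (cst z)) Jfun_glue_cst ?setCK ?mu_Sc//.
rewrite gz divfK ?gt_eqF// addrN expr0n addr0 => /le_trans; apply.
have fz_le : f z * s <= M * s by rewrite ler_wpM2r// ltW.
have Ms_le : (M - f x) * s <= e.
  apply: le_trans (_ : (M - f x) * (e / (M - f x + 1)) <= e).
    by rewrite ler_wpM2l ?subr_ge0// ltW.
  by rewrite mulrA ler_pdivrMr ?ltr_wpDl ?subr_ge0//; nra.
rewrite -/s; nra.
Qed.

End minimizer.

Section rigidity.
Context {R : realType} {d : measure_display} {T : measurableType d}.
Context {mu : {measure set T -> \bar R}}.
Hypothesis mu_fin : (mu setT < +oo)%E.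

Lemma integral_sq_le_min (F G : T -> R) (m : R) :
  mu.-integrable setT (fun t => (F t)%:E) ->
  mu.-integrable setT (fun t => (G t)%:E) ->
  (forall t, m <= F t) ->
  fine (\int[mu]_t (F t)%:E) + fine (\int[mu]_t (G t)%:E) ^+ 2
    <= m * fine (mu setT) ->
  fine (\int[mu]_t (G t)%:E) = 0 /\ {ae mu, forall t, F t = m}.
Proof.
move=> F_int G_int Fm Jle.
set IF := (\int[mu]_t (F t)%:E)%E; set IG := (\int[mu]_t (G t)%:E)%E.
pose phi t := ((F t - m)%:E)%E.
have mphi : measurable_fun setT phi.
  by apply/measurable_EFinP/measurable_funB => //; apply/measurable_EFinP;
    exact: (measurable_int mu F_int).
have phiE : (\int[mu]_t phi t = (fine IF - m * fine (mu setT))%:E)%E.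
  rewrite (eq_integral (fun t => (F t)%:E - m%:E)%E) => [|t _]; last first.
    by rewrite /phi EFinB.
  rewrite integralB// ?integrable_cst_fin// integral_cst//.
  rewrite EFinB EFinM fineK ?(integrable_fin_num measurableT F_int)//.
  by rewrite fineK// measure_fin_num.
have : (0 <= \int[mu]_t phi t)%E.
  by apply: integral_ge0 => t _; rewrite lee_fin subr_ge0.
rewrite phiE lee_fin => phi_ge0.
have IG0 : fine IG = 0 by apply/eqP; rewrite -sqrf_eq0 eq_le sqr_ge0 andbT; lra.
split => //.
have /(ae_eq_integral_abs mu measurableT mphi).1 : (\int[mu]_t `|phi t| = 0)%E.
  rewrite (eq_integral phi) => [|t _]; last by rewrite gee0_abs// lee_fin subr_ge0.
  move: Jle; rewrite -/IF -/IG IG0 expr0n addr0 phiE => Jle.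
  by congr EFin; lra.
by apply: filterS => t /(_ I) /eqP; rewrite /phi eqe subr_eq0 => /eqP.
Qed.

End rigidity.

Section Lp_modification.
Context {R : realType} {d : measure_display} {T : measurableType d}.
Context {mu : {measure set T -> \bar R}}.
Context {E : normedModType R}.

Lemma ae_eq_integral_comp (h : E -> \bar R) {u w : T -> E} :
  {ae mu, forall t, w t = u t} -> (\int[mu]_t h (w t) = \int[mu]_t h (u t))%E.
Proof.
move=> wu; apply: ae_eq_integral_any.
by apply: filterS wu => t ->.
Qed.

Lemma Jfun_ae_eq (f g : E -> R) {u w : T -> E} :
  {ae mu, forall t, w t = u t} -> Jfun mu f g w = Jfun mu f g u.
Proof.
move=> wu; rewrite /Jfun (ae_eq_integral_comp (fun x => (f x)%:E) wu).
by rewrite (ae_eq_integral_comp (fun x => (g x)%:E) wu).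
Qed.

Lemma Lp_fun_modification {p : R} {u : T -> E} : Lp_fun mu p u ->
  exists w : T -> E, [/\ {ae mu, forall t, w t = u t},
    forall V, open V -> measurable (w @^-1` V) &
    mu.-integrable setT (fun t => (`|w t| `^ p)%:E)].
Proof.
move=> [u_sm u_int].
have [N [mN N0 w_open]] := strongly_measurable_modification 0 u_sm.
set w := glue (~` N) u (cst 0) in w_open.
have wu : {ae mu, forall t, w t = u t}.
  exists N; split => // t /= wut; apply: contrapT => Nt.
  by apply: wut; exact: glue_in.
exists w; split => //; apply/integrableP; split.
  apply/measurable_EFinP; apply: (measurableT_comp (measurable_powR p)).
  apply: measurable_comp_open_preimage w_open _.
  exact: continuous_open_superlevel norm_continuous.
rewrite (eq_integral (fun t => (`|w t| `^ p)%:E)) => [|t _]; last first.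
  by rewrite abse_EFin ger0_norm// powR_ge0.
by rewrite (ae_eq_integral_comp (fun x => (`|x| `^ p)%:E) wu).
Qed.

End Lp_modification.

Theorem theorem1p5 (R : realType) (d : measure_display) (T : measurableType d)
  (mu : {measure set T -> \bar R}) (E : completeNormedModType R)
  (f g : E -> R) (p : R) :
  nonatomic mu ->
  (0 < mu setT)%E -> (mu setT < +oo)%E ->
  lower_semicontinuous (fun x => (f x)%:E) ->
  continuous g ->
  (exists M : R, forall x, f x <= M) ->
  (forall M : R, exists x, g x < M) ->
  (forall M : R, exists x, M < g x) ->
  1 <= p ->
  (exists C : R, forall x, `|f x| <= C * (1 + `|x| `^ p) /\
                           `|g x| <= C * (1 + `|x| `^ p)) ->
  (forall x y, (forall z, f x <= f z) -> (forall z, f y <= f z) -> x = y) ->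
  (forall x, g x = 0 -> ~ (forall z, f x <= f z)) ->
  forall D : set (T -> E),
    D `<=` Lp_fun mu p ->
    decomposable D ->
    (forall c : E, D (fun _ => c)) ->
    ~ (exists u, D u /\ forall v, D v -> Jfun mu f g u <= Jfun mu f g v).
Proof.
move=> mu_na mu_gt0 mu_fin f_lsc g_cont [M fM] g_lb g_ub _ [C fgC] f_min_uniq
  g0_not_min D DLp D_dec D_cst [u [Du u_min]].
have Ju_le := Jfun_min_le_cst mu_gt0 mu_fin mu_na g_cont fM g_lb g_ub D_dec D_cst u_min.
have [w [wu w_open w_int]] := Lp_fun_modification (DLp u Du).
have int_comp (h : E -> R) : (forall a, open [set x | a < h x]) ->
    (forall x, `|h x| <= C * (1 + `|x| `^ p)) ->
    mu.-integrable setT (fun t => (h (w t))%:E).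
  move=> h_open; apply: (integrable_comp_growth mu_fin _ w_int).
  exact: measurable_comp_open_preimage w_open h_open.
have r_gt0 : 0 < fine (mu setT) by rewrite fine_gt0// mu_gt0 mu_fin.
pose m := Jfun mu f g u / fine (mu setT).
have [Igw0 fw_ae] : fine (\int[mu]_t (g (w t))%:E)%E = 0 /\
                    {ae mu, forall t, f (w t) = m}.
  apply: (integral_sq_le_min mu_fin).
  - apply: int_comp => [|x]; last by case: (fgC x).
    exact: lower_semicontinuous_open_superlevel.
  - apply: int_comp => [|x]; last by case: (fgC x).
    exact: continuous_open_superlevel.
  - by move=> t; rewrite ler_pdivrMr.
  - change (Jfun mu f g w <= m * fine (mu setT)).
    by rewrite (Jfun_ae_eq _ _ wu) divfK ?gt_eqF.
have w_min t : f (w t) = m -> forall z, f (w t) <= f z.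
  by move=> -> z; rewrite ler_pdivrMr.
have [t0 fwt0] := ae_exists mu_gt0 fw_ae.
have w_ae : {ae mu, forall t, w t = w t0}.
  by apply: filterS fw_ae => t fwt; exact: f_min_uniq (w_min _ fwt) (w_min _ fwt0).
apply: (g0_not_min (w t0)) (w_min _ fwt0).
move: Igw0; rewrite (ae_eq_integral_comp (fun x => (g x)%:E) w_ae) integral_cst//.
rewrite -(fineK (measure_fin_num mu_fin measurableT)) -EFinM /=.
by move/eqP; rewrite mulf_eq0 (gt_eqF r_gt0) orbF => /eqP.
Qed.
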